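(* Assume [Existence] (see context). Let $\omega^*$ be a realization of some $P\in\mathcal{G}^{\delta^*,\theta^*}$ with $\delta^*\in I$, $\theta^*\in\mathcal{K}$, and let $\tilde\delta_n=\min_{\{x,y\}\subset\omega^*_{\Lambda_n},x\ne y}|x-y|$. Then the MLE of the hardcore parameter is $\hat\delta_n=\tilde\delta_n$ if $\tilde\delta_n\in I$ and $\hat\delta_n=\delta_{\max}$ otherwise; consequently $\hat\theta_n=\mathrm{argmin}_{\theta\in\mathcal{K}}K^{\hat\delta_n,\theta}_n(\omega^*_{\Lambda_n})$.
   Context: Setting: $I=[\delta_{\min},\delta_{\max}]$, $0\le\delta_{\min}\le\delta_{\max}\le\infty$; $\emptyset\ne\Theta\subset\mathbb{R}^p$; $\mathcal{K}\subset\Theta$ compact. Configurations are locally finite subsets of $\mathbb{R}^d$; $\omega_\Lambda=\omega\cap\Lambda$; $\pi_\Lambda$ is the unit-intensity Poisson process on bounded $\Lambda$; $\Lambda_n=[-n,n]^d$, $|\Lambda|$ Lebesgue measure; $\Omega_T$ is the set of tempered configurations $\{\omega:\exists t>0\ \forall n\ge1,\sum_{i\in\{-n,\dots,n-1\}^d}N_{i+[0,1]^d}(\omega)^2\le t(2n)^d\}$; $\Omega^\delta_\infty=\{\omega:\inf_{x\ne y\in\omega}|x-y|\ge\delta\}$. For each $\theta\in\Theta$, $(H^\theta_\Lambda)_\Lambda$ are finite-valued measurable energies on $\Omega_T$ satisfying $H^\theta_{\Lambda'}(\omega)=H^\theta_\Lambda(\omega)+\varphi_{\Lambda,\Lambda'}(\omega_{\Lambda^c})$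 for $\Lambda\subset\Lambda'$. Conditional densities $f^{\delta,\theta}_\Lambda(\omega)=e^{-H^\theta_\Lambda(\omega)}\mathbb{1}_{\Omega^\delta_\infty}(\omega)/Z^{\delta,\theta}_\Lambda(\omega_{\Lambda^c})$, with $Z^{\delta,\theta}_\Lambda(\omega_{\Lambda^c})=\int e^{-H^\theta_\Lambda(\omega'_\Lambda\cup\omega_{\Lambda^c})}\mathbb{1}_{\Omega^\delta_\infty}(\omega'_\Lambda\cup\omega_{\Lambda^c})\pi_\Lambda(d\omega'_\Lambda)$; $\mathcal{G}^{\delta,\theta}$ is the set of stationary probability measures $P$ with finite intensity, $P(\Omega^\delta_\infty\cap\Omega_T)=1$, satisfying the DLR equations $\int g\,dP=\iint g(\omega'_\Lambda\cup\omega_{\Lambda^c})f^{\delta,\theta}_\Lambda(\omega'_\Lambda\cup\omega_{\Lambda^c})\pi_\Lambda(d\omega'_\Lambda)P(d\omega)$. [Existence]: for all $\delta\in I,\theta\in\Theta$, bounded $\Lambda$ and $\omega\in\Omega^\delta_\infty\cap\Omega_T$, $Z^{\delta,\theta}_\Lambda(\omega_{\Lambda^c})<\infty$, and $\mathcal{G}^{\delta,\theta}\ne\emptyset$. Free-boundary partition function $Z^{\delta,\theta}_\Lambda=\int e^{-H^\theta_\Lambda(\omega_\Lambda)}\mathbb{1}_{\Omega^\delta_\infty}(\omega_\Lambda)\pi_\Lambda(d\omega_\Lambda)$. The MLE is $(\hat\delta_n,\hat\theta_n)=\mathrm{argmin}_{(\delta,\theta)\in I\times\mathcal{K}}K^{\delta,\theta}_n(\omega^*_{\Lambda_n})$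 (equivalently the argmax of the free-boundary likelihood $e^{-H^\theta_{\Lambda_n}(\omega^*_{\Lambda_n})}\mathbb{1}_{\Omega^\delta_\infty}(\omega^*_{\Lambda_n})/Z^{\delta,\theta}_{\Lambda_n}$), with contrast $K^{\delta,\theta}_n(\omega_{\Lambda_n})=\frac{\ln Z^{\delta,\theta}_{\Lambda_n}}{|\Lambda_n|}+\frac{H^\theta_{\Lambda_n}(\omega_{\Lambda_n})}{|\Lambda_n|}+\infty\cdot\mathbb{1}_{\tilde\delta_n(\omega_{\Lambda_n})<\delta}$. *)

From HB Require Import structures.
From mathcomp Require Import all_boot all_order all_algebra.
From mathcomp Require Import all_classical all_reals all_analysis.
From mathcomp Require Import measurable_realfun.
Set Implicit Arguments. Unset Strict Implicit. Unset Printing Implicit Defensive.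
Import Order.TTheory GRing.Theory Num.Theory.
Import numFieldNormedType.Exports.
Local Open Scope classical_set_scope.
Local Open Scope ring_scope.

Section GibbsDefs.
Variables (R : realType) (d : nat).

Definition pt := 'rV[R]_d.
Definition edist (x y : pt) : R := Num.sqrt (\sum_(i < d) (x ord0 i - y ord0 i) ^+ 2).

(* configurations: subsets of R^d (local finiteness follows a.s. from temperedness) *)
Definition conf := set pt.

Definition Lam (n : nat) : set pt :=
  [set x | forall i, - (n%:R) <= x ord0 i <= n%:R].
Definition volLam (n : nat) : R := ((2 * n)%:R) ^+ d.

Definition bounded_set (L : set pt) := exists n : nat, L `<=` Lam n.

Definition box (a b : pt) : set pt := [set x | forall i, a ord0 i <= x ord0 i <= b ord0 i].
Definition borel_d : set (set pt) := <<s [set B | exists a b, B = box a b] >>.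
Definition bounded_borel (L : set pt) := borel_d L /\ bounded_set L.

Definition Ncount (B : set pt) (w : conf) : \bar R := (\esum_(x in w `&` B) 1)%E.

Definition ucube (n : nat) (i : {ffun 'I_d -> 'I_(2 * n)}) : set pt :=
  [set x | forall j, ((i j)%:R - n%:R <= x ord0 j <= (i j)%:R - n%:R + 1)].

Definition tempered (w : conf) : Prop :=
  exists t : R, 0 < t /\ forall n : nat, (0 < n)%N ->
    (\sum_(i : {ffun 'I_d -> 'I_(2 * n)}) (Ncount (ucube i) w * Ncount (ucube i) w)
      <= (t * ((2 * n)%:R) ^+ d)%:E)%E.

Definition hardcore (delta : \bar R) (w : conf) : Prop :=
  forall x y, w x -> w y -> x <> y -> (delta <= (edist x y)%:E)%E.

(* iterated Lebesgue integral over the first k real coordinates of v : nat -> R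
   (the remaining coordinates being 0) *)
Definition upd (v : nat -> R) (k : nat) (t : R) : nat -> R :=
  fun j => if j == k then t else v j.
Fixpoint iint (k : nat) (f : (nat -> R) -> \bar R) : \bar R :=
  match k with
  | O => f (fun _ => 0)
  | k'.+1 => (\int[lebesgue_measure]_(t in [set: R]) iint k' (fun v => f (upd v k' t)))%E
  end.

Definition vol (L : set pt) : \bar R :=
  iint d (fun v => (\1_L (\row_(i < d) v i) : R)%:E).

(* the j-th point encoded in v *)
Definition pt_of (v : nat -> R) (j : nat) : pt := \row_(i < d) v (j * d + i)%N.
Definition pts_of (v : nat -> R) (m : nat) : conf :=
  [set x | exists2 j, (j < m)%N & x = pt_of v j].

(* integral of g : conf -> [0,+oo] against the unit-intensity Poisson process pi_L *)
Definition poisson_int (L : set pt) (g : conf -> \bar R) : \bar R :=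
  (expeR (- vol L) *
   \sum_(m <oo) (((m`!)%:R)^-1)%:E *
     iint (m * d) (fun v =>
        (\1_[set v | forall j, (j < m)%N -> L (pt_of v j)] v : R)%:E * g (pts_of v m)))%E.

Variables (p : nat) (H : 'rV[R]_p -> set pt -> conf -> R).

Definition Zbd (delta : \bar R) (th : 'rV[R]_p) (L : set pt) (w : conf) : \bar R :=
  poisson_int L (fun w' =>
    ((expR (- H th L (w' `|` (w `&` ~` L)))) *
     \1_(hardcore delta) (w' `|` (w `&` ~` L)))%:E).

Definition cdens (delta : \bar R) (th : 'rV[R]_p) (L : set pt) (w : conf) : \bar R :=
  ((expR (- H th L w) * \1_(hardcore delta) w) / fine (Zbd delta th L w))%:E.

Definition count_events : set (set conf) :=
  [set A | exists (a b : pt) (k : nat), A = [set w | Ncount (box a b) w = k%:R%:E]].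
Definition confM : Type := conf.
HB.instance Definition _ := Pointed.on confM.
HB.instance Definition _ := @isMeasurable.Build (sigma_display count_events)
  confM <<s count_events >> (@sigma_algebra0 _ setT count_events)
  (@sigma_algebraC _ count_events) (@sigma_algebra_bigcup _ setT count_events).

Definition shift (u : pt) (w : conf) : conf := [set x + u | x in w].

Definition gibbs (delta : \bar R) (th : 'rV[R]_p) (P : probability confM R) : Prop :=
  [/\ (forall u (A : set confM), measurable A -> P (shift u @^-1` A) = P A),
      (\int[P]_w Ncount (box (0%R : pt) (const_mx 1%R : pt)) w < +oo)%E,
      {ae P, forall w : confM, hardcore delta w /\ tempered w} &
      (forall L, bounded_borel L ->
        forall g : confM -> \bar R, measurable_fun [set: confM] g -> (forall w, 0 <= g w)%E ->
          \int[P]_w g w =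
          \int[P]_w poisson_int L (fun w' => g (w' `|` (w `&` ~` L)) *
                                            cdens delta th L (w' `|` (w `&` ~` L))))%E].

Definition Zfree (delta : \bar R) (th : 'rV[R]_p) (L : set pt) : \bar R :=
  poisson_int L (fun w => ((expR (- H th L w)) * \1_(hardcore delta) w)%:E).

(* minimal interpoint distance in w_{Lambda_n} (+oo if fewer than 2 points) *)
Definition dtilde (n : nat) (w : conf) : \bar R :=
  ereal_inf [set e | exists x y, [/\ (w `&` Lam n) x, (w `&` Lam n) y, x <> y &
                                       e = (edist x y)%:E]].

Definition contrast (n : nat) (delta : \bar R) (th : 'rV[R]_p) (w : conf) : \bar R :=
  (((ln (fine (Zfree delta th (Lam n))) + H th (Lam n) (w `&` Lam n)) / volLam n)%:E
   + (if `[< (dtilde n w < delta)%E >] then +oo else 0))%E.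

Definition dhat (dmin dmax : \bar R) (n : nat) (w : conf) : \bar R :=
  if `[< (dmin <= dtilde n w <= dmax)%E >] then dtilde n w else dmax.

End GibbsDefs.

From HB Require Import structures.
From mathcomp Require Import all_boot all_order all_algebra.
From mathcomp Require Import all_classical all_reals all_analysis.
From mathcomp Require Import measurable_realfun.
Set Implicit Arguments. Unset Strict Implicit. Unset Printing Implicit Defensive.
Import Order.TTheory GRing.Theory Num.Theory.
Import numFieldNormedType.Exports.
Local Open Scope classical_set_scope.
Local Open Scope ring_scope.

(* The contrast is +oo as soon as delta exceeds the observed minimal distance
   dtilde, while for delta <= dtilde it is finite and nonincreasing in delta:
   raising delta only shrinks the hardcore indicator inside the free partition
   function, hence decreases ln Z.  The contrast is therefore minimised in delta
   by the largest admissible value not above dtilde, which is dhat; minimising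
   in theta at fixed dhat then gives the same minimisers as the joint problem. *)

Local Open Scope ereal_scope.

(* No measurability is needed: the integral of a nonnegative function is the
   supremum of the integrals of its simple minorants. *)
Lemma le_integralT_nonneg d (T : measurableType d) (R : realType)
    (mu : {measure set T -> \bar R}) (f1 f2 : T -> \bar R) :
  (forall x, 0 <= f1 x) -> (forall x, f1 x <= f2 x) ->
  \int[mu]_x f1 x <= \int[mu]_x f2 x.
Proof.
move=> f10 f12; have f20 x : 0 <= f2 x by exact: le_trans (f12 x).
rewrite ge0_integralTE // ge0_integralTE //.
apply: ereal_sup_le => _ [h /= hf <-]; exists h => //= x.
exact: le_trans (hf x) (f12 x).
Qed.

Section IteratedIntegral.
Variable R : realType.

Lemma iint_ge0 k (f : (nat -> R) -> \bar R) :
  (forall v, 0 <= f v) -> 0 <= iint k f.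
Proof.
elim: k f => [|k IH] f f0 //=.
by apply: integral_ge0 => t _; apply: IH.
Qed.

Lemma le_iint k (f1 f2 : (nat -> R) -> \bar R) :
  (forall v, 0 <= f1 v) -> (forall v, f1 v <= f2 v) -> iint k f1 <= iint k f2.
Proof.
elim: k f1 f2 => [|k IH] f1 f2 f10 f12 //=.
apply: le_integralT_nonneg => t; first exact: iint_ge0.
exact: IH.
Qed.

End IteratedIntegral.

Section PoissonIntegral.
Variables (R : realType) (d : nat).
Implicit Types (L : set (pt R d)) (g : conf R d -> \bar R).

Definition poisson_series L g : \bar R :=
  \sum_(m <oo) (((m`!)%:R)^-1)%:E *
    iint (m * d) (fun v =>
      (\1_[set v | forall j, (j < m)%N -> L (pt_of d v j)] v : R)%:E * g (pts_of v m)).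

Lemma poisson_intE L g : poisson_int L g = expeR (- vol L) * poisson_series L g.
Proof. by []. Qed.

Lemma poisson_term_ge0 L g m : (forall w, 0 <= g w) ->
  0 <= (((m`!)%:R)^-1)%:E *
    iint (m * d) (fun v =>
      (\1_[set v | forall j, (j < m)%N -> L (pt_of d v j)] v : R)%:E * g (pts_of v m)).
Proof.
move=> g0; apply: mule_ge0; first by rewrite lee_fin invr_ge0.
by apply: iint_ge0 => v; apply: mule_ge0 => //; rewrite lee_fin indicE.
Qed.

Lemma le_poisson_series L g1 g2 :
  (forall w, 0 <= g1 w) -> (forall w, g1 w <= g2 w) ->
  poisson_series L g1 <= poisson_series L g2.
Proof.
move=> g10 g12; apply: lee_nneseries => [m _ _|m _]; first exact: poisson_term_ge0.
apply: lee_wpmul2l; first by rewrite lee_fin invr_ge0.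
apply: le_iint => v; first by apply: mule_ge0 => //; rewrite lee_fin indicE.
by apply: lee_wpmul2l => //; rewrite lee_fin indicE.
Qed.

(* The term m = 0 of the series is g evaluated at the empty configuration. *)
Lemma poisson_series_gt0 L g :
  (forall w, 0 <= g w) -> 0 < g (pts_of (fun _ => 0%R) 0) -> 0 < poisson_series L g.
Proof.
move=> g0 gp; apply: lt_le_trans (nneseries_lim_ge 1 _); last first.
  by move=> m _ _; apply: poisson_term_ge0.
by rewrite big_nat1 /= fact0 invr1 mul1e indicE mem_set ?mul1e.
Qed.

End PoissonIntegral.

Lemma ler_ln_fine_mule2l (R : realType) (a s1 s2 : \bar R) :
  0 <= a -> 0 < s1 -> s1 <= s2 -> a * s2 < +oo ->
  (ln (fine (a * s1)) <= ln (fine (a * s2)))%R.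
Proof.
move=> a0 s1_gt0 s12; have s2_gt0 : 0 < s2 by exact: lt_le_trans s12.
case: a a0 => [a| |] //; last by rewrite gt0_mulye.
rewrite lee_fin le_eqVlt => /orP[/eqP<-|a_gt0]; first by rewrite !mul0e.
case: s2 s12 s2_gt0 => [s2| |] //; last by rewrite gt0_muley ?lte_fin.
case: s1 s1_gt0 => [s1| |] // s1_gt0 s12 s2_gt0 _.
by rewrite -!EFinM /= ler_ln ?posrE ?mulr_gt0 // ler_wpM2l // ltW.
Qed.

Lemma hardcore_le (R : realType) (d : nat) (delta delta' : \bar R) (w : conf R d) :
  delta <= delta' -> hardcore delta' w -> hardcore delta w.
Proof. by move=> dd' hw x y wx wy xy; exact: le_trans dd' (hw x y wx wy xy). Qed.

Section HardcoreEstimator.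
Variables (R : realType) (d : nat) (dmin dmax : \bar R) (n : nat) (w : conf R d).

Lemma dhat_in : dmin <= dmax -> dmin <= dhat dmin dmax n w <= dmax.
Proof.
by move=> dmin_le_dmax; rewrite /dhat; case: asboolP => //; rewrite dmin_le_dmax lexx.
Qed.

Lemma dhat_max delta : dmin <= delta <= dmax -> ~ dtilde n w < delta ->
  delta <= dhat dmin dmax n w /\ ~ dtilde n w < dhat dmin dmax n w.
Proof.
move=> /andP[dmin_le le_dmax] /negP; rewrite -leNgt => le_dt.
rewrite /dhat; case: asboolP => [_|dt_out]; first by rewrite ltxx.
split=> // lt_dt; apply: dt_out.
by rewrite (le_trans dmin_le le_dt) ltW.
Qed.

End HardcoreEstimator.

Section Contrast.
Variables (R : realType) (d p : nat) (H : 'rV[R]_p -> set (pt R d) -> conf R d -> R).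

Lemma ln_Zfree_le (delta delta' : \bar R) th (L : set (pt R d)) :
  delta <= delta' -> Zfree H delta th L < +oo ->
  (ln (fine (Zfree H delta' th L)) <= ln (fine (Zfree H delta th L)))%R.
Proof.
move=> dd' Zfin.
pose g (e : \bar R) (w : conf R d) := ((expR (- H th L w)) * \1_(hardcore e) w)%:E.
have g0 e w : 0 <= g e w by rewrite lee_fin mulr_ge0 // ?expR_ge0 // indicE.
rewrite /Zfree !poisson_intE; apply: ler_ln_fine_mule2l.
- exact: expeR_ge0.
- apply: poisson_series_gt0 => //; rewrite lte_fin mulr_gt0 ?expR_gt0 // indicE.
  by rewrite mem_set // => x y [j]; rewrite ltn0.
- apply: le_poisson_series => // w; rewrite lee_fin ler_wpM2l ?expR_ge0 // !indicE.
  have [/set_mem hw|] := boolP (w \in (hardcore delta' : set (conf R d))); last by rewrite ler0n.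
  by rewrite mem_set //; exact: hardcore_le hw.
- exact: Zfin.
Qed.

Lemma contrast_infty n delta th w :
  dtilde n w < delta -> contrast H n delta th w = +oo.
Proof. by move=> lt_dt; rewrite /contrast asboolT // addey. Qed.

Lemma contrast_fin n delta th w : ~ dtilde n w < delta ->
  contrast H n delta th w =
  ((ln (fine (Zfree H delta th (@Lam R d n))) + H th (@Lam R d n) (w `&` @Lam R d n))
     / volLam R d n)%:E.
Proof. by move=> dt_ge; rewrite /contrast asboolF // adde0. Qed.

Lemma le_contrast n delta delta' th w :
  delta <= delta' -> ~ dtilde n w < delta' -> Zfree H delta th (@Lam R d n) < +oo ->
  contrast H n delta' th w <= contrast H n delta th w.
Proof.
move=> dd' dt_ge Zfin.
have dt_ge' : ~ dtilde n w < delta by move=> lt_dt; apply: dt_ge; exact: lt_le_trans dd'.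
rewrite !contrast_fin // lee_fin ler_wpM2r ?invr_ge0 ?exprn_ge0 //.
by rewrite lerD2r; exact: ln_Zfree_le.
Qed.

Lemma contrast_dhat_le dmin dmax n delta th w : dmin <= delta <= dmax ->
  Zfree H delta th (@Lam R d n) < +oo ->
  contrast H n (dhat dmin dmax n w) th w <= contrast H n delta th w.
Proof.
move=> delta_in Zfin; have [lt_dt|dt_ge] := asboolP (dtilde n w < delta).
  by rewrite (contrast_infty th lt_dt) leey.
have [le_dhat dhat_ok] := dhat_max delta_in dt_ge.
exact: le_contrast le_dhat dhat_ok Zfin.
Qed.

End Contrast.

Lemma Lam_bounded_borel (R : realType) (d n : nat) : bounded_borel (@Lam R d n).
Proof.
split; last by exists n.
apply: sub_sigma_algebra; exists (const_mx (- n%:R)%R), (const_mx n%:R).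
by apply/seteqP; split=> x /= h i; move: (h i); rewrite ?mxE.
Qed.

Lemma tempered0 (R : realType) (d : nat) : tempered (set0 : conf R d).
Proof.
exists 1%R; split=> // m _.
under eq_bigr => i _ do rewrite /Ncount set0I esum_set0 mule0.
by rewrite big1_eq lee_fin mul1r exprn_ge0 // ler0n.
Qed.

Lemma Zfree_Zbd0 (R : realType) (d p : nat) (H : 'rV[R]_p -> set (pt R d) -> conf R d -> R)
    delta th (L : set (pt R d)) :
  Zfree H delta th L = Zbd H delta th L set0.
Proof.
by rewrite /Zbd /Zfree; congr poisson_int; apply: funext => w'; rewrite set0I setU0.
Qed.

Local Close Scope ereal_scope.

Theorem lemma1 (R : realType) (d p : nat) (dmin dmax : \bar R)
  (Theta K : set 'rV[R]_p) (H : 'rV[R]_p -> set (pt R d) -> conf R d -> R)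
  (dstar : \bar R) (thstar : 'rV[R]_p) (P : probability (confM R d) R) :
  (* I = [dmin, dmax], 0 <= dmin <= dmax <= +oo *)
  (0 <= dmin)%E -> (dmin <= dmax)%E ->
  (* Theta nonempty, K compact subset of Theta *)
  Theta !=set0 -> K `<=` Theta -> compact K ->
  (* energies: measurable on Omega_T, and compatible *)
  (forall th L, Theta th -> bounded_borel L -> forall Y : set R, measurable Y ->
     measurable ([set w : confM R d | tempered w] `&` (H th L @^-1` Y))) ->
  (forall th L L', Theta th -> bounded_borel L -> bounded_borel L' -> L `<=` L' ->
     exists phi : conf R d -> R, forall w, tempered w ->
       H th L' w = H th L w + phi (w `&` ~` L)) ->
  (* [Existence] *)
  (forall delta th L w, (dmin <= delta <= dmax)%E -> Theta th -> bounded_borel L ->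
     hardcore delta w -> tempered w -> (Zbd H delta th L w < +oo)%E) ->
  (forall delta th, (dmin <= delta <= dmax)%E -> Theta th ->
     exists Q : probability (confM R d) R, gibbs H delta th Q) ->
  (* omega* is a realization of P in G^{dstar, thstar} *)
  (dmin <= dstar <= dmax)%E -> K thstar -> gibbs H dstar thstar P ->
  forall n : nat, (0 < n)%N ->
  {ae P, forall w : confM R d,
    let dh := dhat dmin dmax n w in
    [/\ (dmin <= dh <= dmax)%E,
        (forall delta th, (dmin <= delta <= dmax)%E -> K th ->
           (contrast H n dh th w <= contrast H n delta th w)%E) &
        (forall thh, K thh ->
           ((forall delta th, (dmin <= delta <= dmax)%E -> K th ->
               (contrast H n dh thh w <= contrast H n delta th w)%E)
            <-> (forall th, K th -> (contrast H n dh thh w <= contrast H n dh th w)%E)))]}.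
Proof.
move=> _ dmin_le_dmax _ KTheta _ _ _ Zbd_fin _ _ _ _ n _.
have Zfree_fin delta th : (dmin <= delta <= dmax)%E -> K th ->
    (Zfree H delta th (@Lam R d n) < +oo)%E.
  move=> delta_in Kth; rewrite Zfree_Zbd0.
  apply: Zbd_fin delta_in (KTheta _ Kth) (Lam_bounded_borel _ _ _) _ (tempered0 _ _).
  by move=> x y [].
apply: aeW => w /=.
have dhat_I := dhat_in n w dmin_le_dmax.
have dhat_min delta th : (dmin <= delta <= dmax)%E -> K th ->
    (contrast H n (dhat dmin dmax n w) th w <= contrast H n delta th w)%E.
  by move=> delta_in Kth; exact: contrast_dhat_le delta_in (Zfree_fin _ _ delta_in Kth).
split=> // thh Kthh.
split=> [min_joint th Kth|min_theta delta th delta_in Kth]; first exact: min_joint.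
exact: le_trans (min_theta th Kth) (dhat_min _ _ delta_in Kth).
Qed.
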